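(* Let $R$ be the final object of $\mathrm{Coalg}(\mathbf{Sgp},\mathbf{Sgp})$, with underlying semigroup $\langle x_{00},x_{11},p_i,q_i\ (i\in\omega)\mid x_{00}^2=x_{00},\ x_{11}^2=x_{11},\ x_{00}p_i=p_i=p_ix_{11},\ x_{11}q_i=q_i=q_ix_{00}\rangle$. Let $S$ be an object of $\mathrm{Coalg}(\mathbf{Sgp},\mathbf{Sgp})$ such that the unique morphism $S\to R$ sends every element of $|S|$ to $x_{00}$. Then $S$ is isomorphic to a cosemigroup obtained from a semigroup $B$ and an idempotent endomorphism $\varepsilon:B\to B$ by taking $|S|=B$ and $\beta^S(b)=\varepsilon(b)^{(0)}$ for $b\in B$ (i.e. $\beta^S=q_0\circ\varepsilon$ with $q_0:B\to B\amalg B$ the first coprojection). The corresponding representable functor sends a semigroup $A$ to the set of homomorphisms $h:B\to A$ with multiplication $h\cdot h'=h\circ\varepsilon$.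
   Context: $\mathbf{Sgp}$ is the variety of semigroups. A cosemigroup in $\mathbf{Sgp}$ is a semigroup $|S|$ with a homomorphism $\beta^S:|S|\to|S|\amalg|S|$ into the free product of two copies of itself such that, for every semigroup $A$, $\mathrm{Hom}(|S|,A)$ with multiplication $g\cdot h=(g\vee h)\circ\beta^S$ (where $g\vee h$ restricts to $g,h$ on the two copies) is a semigroup. For $u\in|S|$, $u^{(0)}$ and $u^{(1)}$ denote its images under the two coprojections $|S|\to|S|\amalg|S|$. $\mathrm{Coalg}(\mathbf{Sgp},\mathbf{Sgp})$ is the category of cosemigroups with morphisms the homomorphisms $f$ with $(f\amalg f)\circ\beta^S=\beta^{S'}\circ f$; it has a final object $R$ with underlying semigroup as displayed (its co-operation being $\beta^R(x_{00})=x_{00}^{(0)}$, $\beta^R(x_{11})=x_{11}^{(1)}$, $\beta^R(p_i)=p_i^{(0)}(x_{00}^{(1)}x_{11}^{(0)})^ip_i^{(1)}$, $\beta^R(q_i)=q_i^{(1)}(x_{11}^{(0)}x_{00}^{(1)})^iq_i^{(0)}$). *)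

From mathcomp Require Import all_boot.
Set Implicit Arguments. Unset Strict Implicit. Unset Printing Implicit Defensive.

Record magma := Magma { mcar :> Type; mop : mcar -> mcar -> mcar }.
Record sgp := Sgp { smag :> magma;
  smA : forall x y z : smag, mop x (mop y z) = mop (mop x y) z }.

Definition is_hom (M N : magma) (f : M -> N) : Prop :=
  forall x y, f (mop x y) = mop (f x) (f y).

(** * The free product |M| ⊔ |M| of two copies of M.
   Elements are nonempty alternating words: a tag (false = copy 0,
   true = copy 1) for the first letter, then the letters; tags alternate. *)
Record fpw (M : Type) := FPW { ftag : bool; fhead : M; ftail : seq M }.
Arguments FPW {M}.

Definition fp_mul (M : magma) (w1 w2 : fpw M) : fpw M :=
  let: FPW b1 x1 t1 := w1 in let: FPW b2 x2 t2 := w2 in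
  if addb b1 (odd (size t1)) == b2 then
    match t1 with
    | [::] => FPW b1 (mop x1 x2) t2
    | y :: t1' => FPW b1 x1 (belast y t1' ++ mop (last y t1') x2 :: t2)
    end
  else FPW b1 x1 (t1 ++ x2 :: t2).

Definition fp_mag (M : magma) : magma := @Magma (fpw M) (@fp_mul M).

Definition inj0 (M : Type) (x : M) : fpw M := FPW false x [::].
Definition inj1 (M : Type) (x : M) : fpw M := FPW true x [::].

Definition fp_map (M N : Type) (f : M -> N) (w : fpw M) : fpw N :=
  FPW (ftag w) (f (fhead w)) (map f (ftail w)).

Fixpoint alt_eval (M : Type) (A : magma) (g h : M -> A) (b : bool) (acc : A)
    (l : seq M) : A :=
  match l with
  | [::] => acc
  | x :: l' => alt_eval g h (~~ b) (mop acc ((if b then h else g) x)) l'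
  end.

Definition copair (M : Type) (A : magma) (g h : M -> A) (w : fpw M) : A :=
  alt_eval g h (~~ ftag w) ((if ftag w then h else g) (fhead w)) (ftail w).

Definition hmul (M : Type) (A : magma) (beta : M -> fpw M) (g h : M -> A) : M -> A :=
  fun s => copair g h (beta s).

Definition is_cosgp (S : sgp) (beta : S -> fpw S) : Prop :=
  @is_hom S (fp_mag S) beta /\
  forall (A : sgp),
    (forall g h : S -> A, is_hom g -> is_hom h -> is_hom (hmul beta g h)) /\
    (forall g h k : S -> A, is_hom g -> is_hom h -> is_hom k ->
       forall s, hmul beta (hmul beta g h) k s = hmul beta g (hmul beta h k) s).

Definition is_coalg_morph (M N : magma) (bM : M -> fpw M) (bN : N -> fpw N)
    (f : M -> N) : Prop :=
  is_hom f /\ forall s, fp_map f (bM s) = bN (f s).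

(** Generators x00, x11, p_i, q_i; the relations, read as length-decreasing
   rewriting rules x00 x00 -> x00, x11 x11 -> x11, x00 p_i -> p_i,
   p_i x11 -> p_i, x11 q_i -> q_i, q_i x00 -> q_i, form a confluent system,
   so elements of R are the nonempty words with no reducible factor. *)
Inductive rletter := X00 | X11 | P of nat | Q of nat.

Definition rred (a b : rletter) : bool :=
  match a, b with
  | X00, X00 | X11, X11 | X00, P _ | P _, X11 | X11, Q _ | Q _, X00 => true
  | _, _ => false
  end.
(* reductions deleting the right letter *)
Definition rdr (a b : rletter) : bool :=
  match a, b with
  | X00, X00 | X11, X11 | P _, X11 | Q _, X00 => true
  | _, _ => false
  end.
(* reductions deleting the left letter *)
Definition rdl (a b : rletter) : bool :=
  match a, b with
  | X00, P _ | X11, Q _ => true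
  | _, _ => false
  end.

Definition rnr (a b : rletter) : bool := ~~ rred a b.

Definition nfb (w : seq rletter) : bool :=
  if w is a :: t then path rnr a t else false.

Definition Rnf := {w : seq rletter | nfb w}.

Definition rmul_seq (u v : seq rletter) : seq rletter :=
  match u, v with
  | a0 :: tu, b :: v' =>
      if rdr (last a0 tu) b then u ++ v'
      else if rdl (last a0 tu) b then belast a0 tu ++ v
      else u ++ v
  | _, _ => u ++ v
  end.

Lemma rdr_nr a b c : rdr a b -> rnr b c -> rnr a c.
Proof. by case: a => [||i|i]; case: b => [||j|j]; case: c => [||k|k]. Qed.

Lemma rdl_nr d a b : rdl a b -> rnr d a -> rnr d b.
Proof. by case: a => [||i|i]; case: b => [||j|j]; case: d => [||k|k]. Qed.

Lemma rnr_split a b : ~~ rdr a b -> ~~ rdl a b -> rnr a b.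
Proof. by case: a => [||i|i]; case: b => [||j|j]. Qed.

Lemma rmul_nf u v : nfb u -> nfb v -> nfb (rmul_seq u v).
Proof.
case: u => [|a0 tu] //; case: v => [|b v'] //= Hu Hv.
case: ifP => Hr.
  rewrite /= cat_path Hu /=.
  case: v' Hv => [|c v''] //= /andP [Hbc ->]; rewrite andbT.
  exact: rdr_nr Hr Hbc.
case: ifP => Hl.
  case: tu Hu Hr Hl => [|y t'] //= Hu Hr Hl.
  have : path rnr a0 (y :: t') by [].
  rewrite (lastI y t') rcons_path => /andP [H1 H2].
  rewrite cat_path H1 /= Hv andbT.
  exact: rdl_nr Hl H2.
rewrite /= cat_path Hu /= Hv andbT.
by apply: rnr_split; rewrite ?Hr ?Hl.
Qed.

Definition rmul (u v : Rnf) : Rnf :=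
  exist _ (rmul_seq (sval u) (sval v)) (rmul_nf (svalP u) (svalP v)).

Definition Rmag : magma := @Magma Rnf rmul.

Definition rl (a : rletter) : Rnf := @exist _ (fun w => nfb w) [:: a] (erefl true).

Definition Rx00 : Rnf := rl X00.

Definition betaR_letter (a : rletter) : fpw Rnf :=
  match a with
  | X00 => inj0 (rl X00)
  | X11 => inj1 (rl X11)
  | P i => FPW false (rl (P i)) (flatten (nseq i [:: rl X00; rl X11]) ++ [:: rl (P i)])
  | Q i => FPW true (rl (Q i)) (flatten (nseq i [:: rl X11; rl X00]) ++ [:: rl (Q i)])
  end.

Definition betaR (w : Rnf) : fpw Rnf :=
  match sval w with
  | a :: t => foldl (fun acc b => @fp_mul Rmag acc (betaR_letter b)) (betaR_letter a) t
  | [::] => betaR_letter X00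
  end.

From mathcomp Require Import all_boot.
Set Implicit Arguments. Unset Strict Implicit. Unset Printing Implicit Defensive.

(* Since beta^R(x00) = x00^(0), the morphism condition (c ⊔ c) ∘ beta^S =
   beta^R ∘ c for the constant map c forces every beta^S(s) to be a one-letter
   word of the first copy, i.e. beta^S = inj0 ∘ eps for a map eps : S -> S.
   Such a beta is a homomorphism exactly when eps is, and the convolution it
   induces is simply (g · h) = g ∘ eps.  Coassociativity, tested on A := S and
   g = h = k = id, then says eps ∘ eps = eps.  Conversely, every idempotent
   endomorphism eps of a semigroup B makes (B, inj0 ∘ eps) a cosemigroup.
   The theorem follows with B := |S|, eps as above and the identity map. *)

Lemma hmul_inj0 (B : Type) (A : magma) (eps : B -> B) (g h : B -> A) (b : B) :
  hmul (fun b => inj0 (eps b)) g h b = g (eps b).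
Proof. by []. Qed.

Lemma inj0_comp_hom (B : magma) (eps : B -> B) :
  @is_hom B (fp_mag B) (fun b => inj0 (eps b)) <-> is_hom eps.
Proof.
split=> Heps x y; last by rewrite /= Heps.
by have := Heps x y; case.
Qed.

Lemma cosgp_of_idempotent (B : sgp) (eps : B -> B) :
  is_hom eps -> (forall b, eps (eps b) = eps b) ->
  is_cosgp (fun b : B => inj0 (eps b)).
Proof.
move=> Heps Hidem; split; first exact/inj0_comp_hom.
move=> A; split.
- by move=> g h Hg _ x y; rewrite !hmul_inj0 Heps Hg.
- by move=> g h k _ _ _ b; rewrite !hmul_inj0 Hidem.
Qed.

Lemma fp_map_inj0 (M N : Type) (f : M -> N) (w : fpw M) (y : N) :
  fp_map f w = inj0 y -> w = inj0 (fhead w).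
Proof. by case: w => b x [|? ?] /= [->]. Qed.

Lemma betaR_x00 : betaR Rx00 = inj0 Rx00.
Proof. by []. Qed.

Lemma beta_first_copy (S : sgp) (betaS : S -> fpw S) :
  @is_coalg_morph S Rmag betaS betaR (fun _ => Rx00) ->
  forall s, betaS s = inj0 (fhead (betaS s)).
Proof.
by move=> [_ Hmorph] s; apply: (@fp_map_inj0 _ _ (fun _ => Rx00) _ Rx00);
  rewrite Hmorph betaR_x00.
Qed.

Section FirstCopy.
Variables (S : sgp) (beta : S -> fpw S) (eps : S -> S).
Hypothesis beta_eps : forall s, beta s = inj0 (eps s).

Lemma first_copy_hom : @is_hom S (fp_mag S) beta -> is_hom eps.
Proof.
by move=> Hbeta; apply/inj0_comp_hom => x y; rewrite -!beta_eps Hbeta.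
Qed.

Lemma first_copy_idempotent : is_cosgp beta -> forall s, eps (eps s) = eps s.
Proof.
move=> [_ Hcosgp] s; have [_ Hassoc] := Hcosgp S.
have Hid : @is_hom S S id by [].
have := Hassoc id id id Hid Hid Hid s.
by rewrite /hmul /copair !beta_eps /= beta_eps.
Qed.

End FirstCopy.

Theorem proposition11p7 (S : sgp) (betaS : S -> fpw S) :
  is_cosgp betaS ->
  (* the unique morphism S -> R is the constant map with value x00 *)
  @is_coalg_morph S Rmag betaS betaR (fun _ => Rx00) ->
  exists (B : sgp) (eps : B -> B),
    [/\ @is_hom B B eps,
        (forall b, eps (eps b) = eps b),
        is_cosgp (fun b : B => inj0 (eps b)),
        (exists f : S -> B, bijective f /\
           @is_coalg_morph S B betaS (fun b : B => inj0 (eps b)) f) &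
        (forall (A : sgp) (h h' : B -> A), @is_hom B A h -> @is_hom B A h' ->
           forall b, hmul (fun b : B => inj0 (eps b)) h h' b = h (eps b))].
Proof.
move=> Hcosgp Hmorph.
pose eps (s : S) := fhead (betaS s).
have Hbeta : forall s, betaS s = inj0 (eps s) := beta_first_copy Hmorph.
have Heps : is_hom eps by apply: first_copy_hom Hbeta _; case: Hcosgp.
have Hidem := first_copy_idempotent Hbeta Hcosgp.
exists S, eps; split=> //; first exact: cosgp_of_idempotent.
exists id; split; first by exists id.
by split=> // s; rewrite Hbeta.
Qed.
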